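(* If $\Gamma\vdash M:A\mid\Delta$ is derivable in the simply typed $\lambda\mu$-calculus, then $\Gamma^D\vdash M:A^D\mid\Delta^C$ is derivable in the intersection type system, where the translations are as defined in the context.
   Context: $\lambda\mu$-terms: $M,N ::= x \mid \lambda x.M \mid MN \mid \mu\alpha.[\beta]M$ over disjoint denumerable sets of term variables and names ($\lambda$ binds $x$, $\mu$ binds $\alpha$; bound and free variables/names are assumed distinct). Simply typed $\lambda\mu$-calculus. Formulas $A,B ::= \varphi \mid A\to B$ with $\varphi$ ranging over propositional variables. $\Gamma$ maps finitely many term variables to formulas, $\Delta$ finitely many names to formulas. Rules: (ax) $\Gamma,x{:}A\vdash x:A\mid\Delta$; ($\mu_1$) from $\Gamma\vdash M:A\mid\alpha{:}A,\Delta$ infer $\Gamma\vdash\mu\alpha.[\alpha]M:A\mid\Delta$; ($\mu_2$) from $\Gamma\vdash M:B\mid\alpha{:}A,\beta{:}B,\Delta$ infer $\Gamma\vdash\mu\alpha.[\beta]M:A\mid\beta{:}B,\Delta$; ($\to$I) from $\Gamma,x{:}A\vdash M:B\mid\Delta$ infer $\Gamma\vdash\lambda x.M:A\to B\mid\Delta$; ($\to$E) from $\Gamma\vdash M:A\to B\mid\Delta$ and $\Gamma\vdash N:A\mid\Delta$ infer $\Gamma\vdash MN:B\mid\Delta$. Intersection types. With a single type constant $\nu$ and a symbol $\omega$ (not itself a type): $\mathcal{T}_D:\ \delta ::= \nu \mid \omega\to\nu \mid \kappa\to\nu \mid \delta\wedge\delta$; $\mathcal{T}_C:\ \kappa ::=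 \delta\times\omega \mid \delta\times\kappa \mid \kappa\wedge\kappa$ ($\times$ right-associative). $\le$ is the least preorder on $\mathcal{T}_D$ and on $\mathcal{T}_C$ such that: $\sigma\wedge\tau\le\sigma$; $\sigma\wedge\tau\le\tau$; $\nu\le\omega\to\nu$; $\omega\to\nu\le\nu$; $\delta_1\times\delta_2\times\omega\le\delta_1\times\omega$; $(\delta_1\times\omega)\wedge(\delta_2\times\kappa)\le(\delta_1\wedge\delta_2)\times\kappa$; $(\delta_1\times\kappa_1)\wedge(\delta_2\times\kappa_2)\le(\delta_1\wedge\delta_2)\times(\kappa_1\wedge\kappa_2)$; $\delta_1\le\delta_2\Rightarrow\delta_1\times\omega\le\delta_2\times\omega$; $\delta_1\le\delta_2,\kappa_1\le\kappa_2\Rightarrow\delta_1\times\kappa_1\le\delta_2\times\kappa_2$; $\sigma\le\tau_1,\sigma\le\tau_2\Rightarrow\sigma\le\tau_1\wedge\tau_2$; $\kappa_2\le\kappa_1\Rightarrow\kappa_1\to\nu\le\kappa_2\to\nu$. Judgements $\Gamma\vdash M:\delta\mid\Delta$ with $\Gamma$ a finite map from variables to $\mathcal{T}_D$ and $\Delta$ from names to $\mathcal{T}_C$ (variables/names of $\Gamma,\Delta$ not bound in $M$). Rules: (ax) $\Gamma,x{:}\delta\vdash x:\delta\mid\Delta$; (abs) from $\Gamma,x{:}\delta\vdash M:\kappa\to\nu\mid\Delta$ infer $\Gamma\vdash\lambda x.M:\delta\times\kappa\to\nu\mid\Delta$; (app) from $\Gamma\vdash M:\delta\times\kappa\to\nu\mid\Delta$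 and $\Gamma\vdash N:\delta\mid\Delta$ infer $\Gamma\vdash MN:\kappa\to\nu\mid\Delta$ ($\kappa\in\mathcal{T}_C$ or $\kappa=\omega$ in (abs),(app)); ($\mu$) from $\Gamma\vdash M:\kappa'\to\nu\mid\alpha{:}\kappa,\beta{:}\kappa',\Delta$ infer $\Gamma\vdash\mu\alpha.[\beta]M:\kappa\to\nu\mid\beta{:}\kappa',\Delta$ ($\beta\neq\alpha$), and from $\Gamma\vdash M:\kappa\to\nu\mid\alpha{:}\kappa,\Delta$ infer $\Gamma\vdash\mu\alpha.[\alpha]M:\kappa\to\nu\mid\Delta$; ($\le$) from $\Gamma\vdash M:\delta\mid\Delta$, $\delta\le\delta'$ infer $\Gamma\vdash M:\delta'\mid\Delta$; ($\wedge$) from $\Gamma\vdash M:\delta\mid\Delta$ and $\Gamma\vdash M:\delta'\mid\Delta$ infer $\Gamma\vdash M:\delta\wedge\delta'\mid\Delta$. Translation: $\varphi^C=\nu\times\omega$, $(A\to B)^C=(A^C\to\nu)\times B^C$, $A^D=A^C\to\nu$; $\Gamma^D=\{x{:}A^D\mid x{:}A\in\Gamma\}$, $\Delta^C=\{\alpha{:}A^C\mid\alpha{:}A\in\Delta\}$. *)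

From Stdlib Require Import Arith.

Set Implicit Arguments.

(* Term variables and names are both represented by nat, but live in
   separate namespaces (contexts Gamma for variables, Delta for names). *)
Definition var := nat.
Definition name := nat.

Inductive term : Type :=
| Var : var -> term
| Lam : var -> term -> term
| App : term -> term -> term
| Mu  : name -> name -> term -> term.   (* Mu a b M  =  mu a.[b] M *)

(* Finite maps are modelled as partial functions; extension "Gamma, x:A"
   is [upd Gamma x A] together with the side condition [Gamma x = None]. *)
Definition upd (T : Type) (f : nat -> option T) (x : nat) (v : T) : nat -> option T :=
  fun y => if Nat.eqb y x then Some v else f y.

Inductive form : Type :=
| Atom : nat -> form
| Imp  : form -> form -> form.

Definition sctx := var -> option form.
Definition snctx := name -> option form.

Inductive styped : sctx -> term -> form -> snctx -> Prop :=
| st_ax : forall G D x A, G x = Some A -> styped G (Var x) A D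
| st_mu1 : forall G D a M A,
    D a = None ->
    styped G M A (upd D a A) ->
    styped G (Mu a a M) A D
| st_mu2 : forall G D a b M A B,
    a <> b -> D a = None -> D b = Some B ->
    styped G M B (upd D a A) ->
    styped G (Mu a b M) A D
| st_abs : forall G D x M A B,
    G x = None ->
    styped (upd G x A) M B D ->
    styped G (Lam x M) (Imp A B) D
| st_app : forall G D M N A B,
    styped G M (Imp A B) D ->
    styped G N A D ->
    styped G (App M N) B D.

(* tD : delta ::= nu | omega -> nu | kappa -> nu | delta /\ delta
   tC : kappa ::= delta x omega | delta x kappa | kappa /\ kappa *)
Inductive tD : Type :=
| nu : tD
| om_arr : tD
| k_arr : tC -> tD
| dmeet : tD -> tD -> tD
with tC : Type :=
| prod_om : tD -> tC
| prod : tD -> tC -> tC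
| cmeet : tC -> tC -> tC.

(* "kappa -> nu" and "delta x kappa" where kappa is in T_C (Some) or omega (None) *)
Definition arr (k : option tC) : tD :=
  match k with None => om_arr | Some k => k_arr k end.
Definition pr (d : tD) (k : option tC) : tC :=
  match k with None => prod_om d | Some k => prod d k end.

Inductive leD : tD -> tD -> Prop :=
| leD_refl : forall d, leD d d
| leD_trans : forall d1 d2 d3, leD d1 d2 -> leD d2 d3 -> leD d1 d3
| leD_meetl : forall d1 d2, leD (dmeet d1 d2) d1
| leD_meetr : forall d1 d2, leD (dmeet d1 d2) d2
| leD_nu_om : leD nu om_arr
| leD_om_nu : leD om_arr nu
| leD_glb : forall d d1 d2, leD d d1 -> leD d d2 -> leD d (dmeet d1 d2)
| leD_arr : forall k1 k2, leC k2 k1 -> leD (k_arr k1) (k_arr k2)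
with leC : tC -> tC -> Prop :=
| leC_refl : forall k, leC k k
| leC_trans : forall k1 k2 k3, leC k1 k2 -> leC k2 k3 -> leC k1 k3
| leC_meetl : forall k1 k2, leC (cmeet k1 k2) k1
| leC_meetr : forall k1 k2, leC (cmeet k1 k2) k2
| leC_drop : forall d1 d2, leC (prod d1 (prod_om d2)) (prod_om d1)
| leC_dist_om : forall d1 d2 k,
    leC (cmeet (prod_om d1) (prod d2 k)) (prod (dmeet d1 d2) k)
| leC_dist : forall d1 d2 k1 k2,
    leC (cmeet (prod d1 k1) (prod d2 k2)) (prod (dmeet d1 d2) (cmeet k1 k2))
| leC_prod_om : forall d1 d2, leD d1 d2 -> leC (prod_om d1) (prod_om d2)
| leC_prod : forall d1 d2 k1 k2,
    leD d1 d2 -> leC k1 k2 -> leC (prod d1 k1) (prod d2 k2)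
| leC_glb : forall k k1 k2, leC k k1 -> leC k k2 -> leC k (cmeet k1 k2).

Definition ictx := var -> option tD.
Definition inctx := name -> option tC.

Inductive ityped : ictx -> term -> tD -> inctx -> Prop :=
| it_ax : forall G D x d, G x = Some d -> ityped G (Var x) d D
| it_abs : forall G D x M d k,
    G x = None ->
    ityped (upd G x d) M (arr k) D ->
    ityped G (Lam x M) (k_arr (pr d k)) D
| it_app : forall G D M N d k,
    ityped G M (k_arr (pr d k)) D ->
    ityped G N d D ->
    ityped G (App M N) (arr k) D
| it_mu2 : forall G D a b M k k',
    a <> b -> D a = None -> D b = Some k' ->
    ityped G M (k_arr k') (upd D a k) ->
    ityped G (Mu a b M) (k_arr k) D
| it_mu1 : forall G D a M k,
    D a = None ->
    ityped G M (k_arr k) (upd D a k) ->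
    ityped G (Mu a a M) (k_arr k) D
| it_le : forall G D M d d', ityped G M d D -> leD d d' -> ityped G M d' D
| it_meet : forall G D M d d',
    ityped G M d D -> ityped G M d' D -> ityped G M (dmeet d d') D.

Fixpoint transC (A : form) : tC :=
  match A with
  | Atom _ => prod_om nu
  | Imp A B => prod (k_arr (transC A)) (transC B)
  end.
Definition transD (A : form) : tD := k_arr (transC A).

Definition ctxD (G : sctx) : ictx := fun x => option_map transD (G x).
Definition ctxC (D : snctx) : inctx := fun a => option_map transC (D a).

From Stdlib Require Import FunctionalExtensionality.

(* Each simply typed rule is mirrored by the intersection rule of the same
   shape: [(A -> B)^D] is literally [A^D x B^C -> nu], so (->I) and (->E)
   become (abs) and (app) with [kappa = B^C], and the two mu-rules go
   through because [A^D = A^C -> nu] and names are typed by [A^C].  The only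
   bookkeeping is that translating a context commutes with extending it. *)

Lemma option_map_upd {T U : Type} (f : T -> U) (g : nat -> option T) x v :
  (fun y => option_map f (upd g x v y)) = upd (fun y => option_map f (g y)) x (f v).
Proof.
  apply functional_extensionality; intro y; unfold upd.
  destruct (Nat.eqb y x); reflexivity.
Qed.

Lemma ctxD_upd (G : sctx) x A : ctxD (upd G x A) = upd (ctxD G) x (transD A).
Proof. exact (option_map_upd transD G x A). Qed.

Lemma ctxC_upd (D : snctx) a A : ctxC (upd D a A) = upd (ctxC D) a (transC A).
Proof. exact (option_map_upd transC D a A). Qed.

Lemma transD_Imp A B : transD (Imp A B) = k_arr (pr (transD A) (Some (transC B))).
Proof. reflexivity. Qed.

Lemma transD_arr B : transD B = arr (Some (transC B)).
Proof. reflexivity. Qed.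

Theorem mainTheorem3 :
  forall (G : sctx) (D : snctx) (M : term) (A : form),
    styped G M A D -> ityped (ctxD G) M (transD A) (ctxC D).
Proof.
  intros G D M A H; induction H as
    [G D x A Gx | G D a M A Da _ IH | G D a b M A B ab Da Db _ IH
    | G D x M A B Gx _ IH | G D M N A B _ IHM _ IHN].
  - apply it_ax; unfold ctxD; rewrite Gx; reflexivity.
  - apply it_mu1.
    + unfold ctxC; rewrite Da; reflexivity.
    + rewrite <- ctxC_upd; exact IH.
  - apply it_mu2 with (k' := transC B); [exact ab | | |].
    + unfold ctxC; rewrite Da; reflexivity.
    + unfold ctxC; rewrite Db; reflexivity.
    + rewrite <- ctxC_upd; exact IH.
  - rewrite transD_Imp; apply it_abs.
    + unfold ctxD; rewrite Gx; reflexivity.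
    + rewrite <- ctxD_upd; exact IH.
  - rewrite transD_arr; apply it_app with (d := transD A); assumption.
Qed.
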